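(* Let $a,A$ be real with $a+3>0$ and $\frac{a+3}{2}=\frac{2}{A+3}$, and let $\xi,\eta,\mu$ be real. Then the general polynomial potentials $$U(r)=\xi r^{a+1}+\mu r^{2\left(\sqrt{\frac{a+3}{2}}-1\right)},\qquad V(\rho)=\eta\rho^{A+1}+\mu\left(\frac{A+3}{2}\right)^{2}\rho^{2\left(\sqrt{\frac{A+3}{2}}-1\right)}$$ are quantum Newtonianly dual, in the following sense: if $\mathcal{E}$ is real, $l,\ell$ are real with $l+\frac12=\frac{2}{A+3}(\ell+\frac12)$, $\xi=-\mathcal{E}\left(\frac{2}{A+3}\right)^2$, $E=-\eta\left(\frac{2}{A+3}\right)^2$, and $u\in C^2((0,\infty))$ solves $u''+\left[E-\frac{l(l+1)}{r^2}-U(r)\right]u=0$, then $v(\rho)=\rho^{-(A+1)/4}u\left(\rho^{(A+3)/2}\right)$ solves $v''+\left[\mathcal{E}-\frac{\ell(\ell+1)}{\rho^2}-V(\rho)\right]v=0$ on $(0,\infty)$. Moreover, $\xi r^{a+1}$ is the Newton dual of $\eta\rho^{A+1}$, and $\mu r^{2(\sqrt{(a+3)/2}-1)}$ is the Newton dual of $\mu\left(\frac{A+3}{2}\right)^2\rho^{2(\sqrt{(A+3)/2}-1)}$; i.e. with $b=2\sqrt{\frac{a+3}{2}}-3$ and $B=2\sqrt{\frac{A+3}{2}}-3$ one also has $\frac{b+3}{2}=\frac{2}{B+3}$.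
   Context: Three-dimensional radial equation (units $\hbar=2m=1$): $u''+\left[E-\frac{l(l+1)}{r^2}-W(r)\right]u=0$ for a central potential $W$. Two power potentials $\xi r^{\alpha+1}$ and $\eta\rho^{\beta+1}$ are Newtonianly dual when $\frac{\alpha+3}{2}=\frac{2}{\beta+3}$. *)

From Stdlib Require Import Reals.
From Coquelicot Require Import Coquelicot.
Open Scope R_scope.

Definition C2_pos (u : R -> R) : Prop :=
  exists u1 u2 : R -> R, forall r, 0 < r ->
    is_derive u r (u1 r) /\ is_derive u1 r (u2 r) /\ continuous u2 r.

Definition solves_radial (W : R -> R) (En l : R) (u : R -> R) : Prop :=
  exists u1 u2 : R -> R, forall r, 0 < r ->
    is_derive u r (u1 r) /\ is_derive u1 r (u2 r) /\
    u2 r + (En - l * (l + 1) / r ^ 2 - W r) * u r = 0.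

Definition newton_dual_exp (alpha beta : R) : Prop :=
  (alpha + 3) / 2 = 2 / (beta + 3).

Definition U_pot (a xi mu : R) (r : R) : R :=
  xi * Rpower r (a + 1) + mu * Rpower r (2 * (sqrt ((a + 3) / 2) - 1)).

Definition V_pot (A eta mu : R) (rho : R) : R :=
  eta * Rpower rho (A + 1)
  + mu * ((A + 3) / 2) ^ 2 * Rpower rho (2 * (sqrt ((A + 3) / 2) - 1)).

Definition newton_transform (A : R) (u : R -> R) (rho : R) : R :=
  Rpower rho (- (A + 1) / 4) * u (Rpower rho ((A + 3) / 2)).

(** Newton's duality is a Liouville transformation.  With [s = (A+3)/2] and
    [p = (1-s)/2], the function [v(ρ) = ρ^p u(ρ^s)] satisfies
    [v'' = s^2 ρ^(2s-2) ρ^p u''(ρ^s) + p(p-1) ρ^(p-2) u(ρ^s)]: the choice of [p]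
    makes the [u'] terms cancel.  Hence [u'' + Q u = 0] turns into
    [v'' + (s^2 ρ^(2s-2) Q(ρ^s) - p(p-1)/ρ^2) v = 0].  Under this map a power
    term [ζ r^(α+1)] becomes [s^2 ζ ρ^(s(α+3)-2)]: the term [ξ r^(a+1)] becomes
    the constant energy [calE], the constant [E] becomes [η ρ^(A+1)], the
    centrifugal terms match because [l + 1/2 = (ℓ + 1/2)/s], and the [μ]-term
    with exponent [b] goes to the exponent [2 sqrt s - 2] of [V]. *)
From Stdlib Require Import Reals Lra.
From Coquelicot Require Import Coquelicot.
Open Scope R_scope.

Lemma Rpower_pos (x y : R) : 0 < Rpower x y.
Proof. unfold Rpower; apply exp_pos. Qed.

Lemma Rpower_minus_2 (t x : R) : 0 < t -> Rpower t (x - 2) = Rpower t x / t ^ 2.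
Proof.
  intros Ht.
  unfold Rminus, Rdiv.
  rewrite Rpower_plus, Rpower_Ropp.
  replace 2 with (INR 2) by (simpl; ring).
  now rewrite Rpower_pow.
Qed.

Lemma Rpower_comp_div (t s alpha : R) :
  Rpower (Rpower t s) (alpha + 1)
  = Rpower t (s * (alpha + 3) - 2) / Rpower t (2 * s - 2).
Proof.
  assert (0 < Rpower t (2 * s - 2)) by apply Rpower_pos.
  rewrite Rpower_mult.
  replace (s * (alpha + 3) - 2) with (s * (alpha + 1) + (2 * s - 2)) by ring.
  rewrite Rpower_plus; field; lra.
Qed.

Lemma is_derive_Rpower (t y : R) : 0 < t ->
  is_derive (fun r => Rpower r y) t (y * Rpower t (y - 1)).
Proof. intros Ht; apply is_derive_Reals, derivable_pt_lim_power, Ht. Qed.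

Lemma is_derive_val (f : R -> R) (x l l' : R) :
  is_derive f x l -> l = l' -> is_derive f x l'.
Proof. now intros Hf <-. Qed.

Lemma is_derive_power_comp (p s : R) (f : R -> R) (t df : R) : 0 < t ->
  is_derive f (Rpower t s) df ->
  is_derive (fun r => Rpower r p * f (Rpower r s)) t
    (p * Rpower t (p - 1) * f (Rpower t s) + s * Rpower t (p + s - 1) * df).
Proof.
  intros Ht Hf.
  eapply is_derive_val.
  - apply (is_derive_mult (fun r => Rpower r p) (fun r => f (Rpower r s)));
      [apply is_derive_Rpower, Ht | | intros; apply Rmult_comm].
    apply (is_derive_comp f (fun r => Rpower r s)); [exact Hf | apply is_derive_Rpower, Ht].
  - replace (p + s - 1) with (p + (s - 1)) by ring.
    rewrite Rpower_plus; unfold plus, scal, mult; simpl; unfold mult; simpl; ring.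
Qed.

Definition solves_normal_form (Q u : R -> R) : Prop :=
  exists u1 u2 : R -> R, forall r, 0 < r ->
    is_derive u r (u1 r) /\ is_derive u1 r (u2 r) /\ u2 r + Q r * u r = 0.

Lemma solves_normal_form_ext (Q Q' u : R -> R) :
  (forall r, 0 < r -> Q r = Q' r) ->
  solves_normal_form Q u -> solves_normal_form Q' u.
Proof.
  intros HQ [u1 [u2 Hu]].
  exists u1, u2; intros r Hr.
  destruct (Hu r Hr) as [D1 [D2 Eq]].
  rewrite <- HQ by exact Hr.
  auto.
Qed.

Section PowerTransform.

Variables (s : R) (Q u u1 u2 : R -> R).
Let p := (1 - s) / 2.

Hypothesis Hu : forall r, 0 < r ->
  is_derive u r (u1 r) /\ is_derive u1 r (u2 r) /\ u2 r + Q r * u r = 0.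

Lemma is_derive2_power_transform (t : R) : 0 < t ->
  is_derive
    (fun r => p * (Rpower r (p - 1) * u (Rpower r s))
              + s * (Rpower r (p + s - 1) * u1 (Rpower r s))) t
    (s ^ 2 * Rpower t (2 * s - 2) * Rpower t p * u2 (Rpower t s)
     + p * (p - 1) * Rpower t p / t ^ 2 * u (Rpower t s)).
Proof.
  intros Ht.
  destruct (Hu (Rpower t s) (Rpower_pos _ _)) as [D1 [D2 _]].
  eapply is_derive_val.
  - apply (is_derive_plus
             (fun r => p * (Rpower r (p - 1) * u (Rpower r s)))
             (fun r => s * (Rpower r (p + s - 1) * u1 (Rpower r s))));
      apply is_derive_scal; eapply is_derive_power_comp; eassumption.
  - unfold plus; simpl.
    replace (p - 1 + s - 1) with (p + s - 1 - 1) by ring.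
    replace (p + s - 1 + s - 1) with (2 * s - 2 + p) by ring.
    replace (p - 1 - 1) with (p - 2) by ring.
    rewrite Rpower_plus, Rpower_minus_2 by exact Ht.
    (* the [u1] terms cancel because [2 p + s - 1 = 0] *)
    unfold p; field; lra.
Qed.

Lemma solves_power_transform_of_derivs :
  solves_normal_form
    (fun t => s ^ 2 * Rpower t (2 * s - 2) * Q (Rpower t s) - p * (p - 1) / t ^ 2)
    (fun t => Rpower t p * u (Rpower t s)).
Proof.
  exists (fun t => p * (Rpower t (p - 1) * u (Rpower t s))
                   + s * (Rpower t (p + s - 1) * u1 (Rpower t s))).
  exists (fun t => s ^ 2 * Rpower t (2 * s - 2) * Rpower t p * u2 (Rpower t s)
                   + p * (p - 1) * Rpower t p / t ^ 2 * u (Rpower t s)).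
  intros t Ht.
  destruct (Hu (Rpower t s) (Rpower_pos _ _)) as [D1 [_ Eq]].
  split; [| split].
  - eapply is_derive_val; [apply is_derive_power_comp; eassumption | ring].
  - exact (is_derive2_power_transform t Ht).
  - transitivity (s ^ 2 * Rpower t (2 * s - 2) * Rpower t p
                  * (u2 (Rpower t s) + Q (Rpower t s) * u (Rpower t s))).
    + field; lra.
    + rewrite Eq; ring.
Qed.

End PowerTransform.

Lemma solves_normal_form_power_transform (s : R) (Q u : R -> R) :
  solves_normal_form Q u ->
  solves_normal_form
    (fun t => s ^ 2 * Rpower t (2 * s - 2) * Q (Rpower t s)
              - (1 - s) / 2 * ((1 - s) / 2 - 1) / t ^ 2)
    (fun t => Rpower t ((1 - s) / 2) * u (Rpower t s)).
Proof.
  intros [u1 [u2 Hu]].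
  exact (solves_power_transform_of_derivs s Q u u1 u2 Hu).
Qed.

Lemma newton_dual_exp_pos (a A : R) :
  0 < a + 3 -> newton_dual_exp a A -> 0 < A + 3.
Proof.
  unfold newton_dual_exp; intros Ha Hd.
  destruct (Rtotal_order 0 (A + 3)) as [Hlt | [Heq | Hgt]]; [exact Hlt | |].
  - rewrite <- Heq, Rdiv_0_r in Hd; lra.
  - assert (/ (A + 3) < 0) by (apply Rinv_lt_0_compat; exact Hgt).
    unfold Rdiv in Hd; lra.
Qed.

Lemma newton_dual_exp_sqrt (a A : R) : 0 < a + 3 -> newton_dual_exp a A ->
  newton_dual_exp (2 * sqrt ((a + 3) / 2) - 3) (2 * sqrt ((A + 3) / 2) - 3).
Proof.
  intros Ha Hd.
  pose proof (newton_dual_exp_pos a A Ha Hd) as HA.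
  unfold newton_dual_exp in *.
  replace ((A + 3) / 2) with (/ ((a + 3) / 2)) by (rewrite Hd; field; lra).
  rewrite sqrt_inv.
  assert (0 < sqrt ((a + 3) / 2)) by (apply sqrt_lt_R0; lra).
  field; lra.
Qed.

Lemma newton_dual_coefficient (a A xi eta mu calE E l ell t : R) :
  0 < a + 3 ->
  newton_dual_exp a A ->
  l + 1 / 2 = 2 / (A + 3) * (ell + 1 / 2) ->
  xi = - calE * (2 / (A + 3)) ^ 2 ->
  E = - eta * (2 / (A + 3)) ^ 2 ->
  0 < t ->
  let s := (A + 3) / 2 in
  s ^ 2 * Rpower t (2 * s - 2)
    * (E - l * (l + 1) / Rpower t s ^ 2 - U_pot a xi mu (Rpower t s))
  - (1 - s) / 2 * ((1 - s) / 2 - 1) / t ^ 2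
  = calE - ell * (ell + 1) / t ^ 2 - V_pot A eta mu t.
Proof.
  intros Ha Hd Hl Hxi HE Ht s.
  pose proof (newton_dual_exp_pos a A Ha Hd) as HA.
  assert (Hs : 0 < s) by (unfold s; lra).
  assert (Hinv : 2 / (A + 3) = / s) by (unfold s; field; lra).
  assert (Has : a + 3 = 2 / s) by (unfold newton_dual_exp in Hd; rewrite Hinv in Hd; unfold Rdiv; lra).
  rewrite Hinv in Hl, Hxi, HE.
  assert (Hxi_exp : s * (a + 3) - 2 = 0) by (rewrite Has; field; lra).
  assert (Hmu_exp : s * (2 * sqrt ((a + 3) / 2) - 3 + 3) - 2 = 2 * (sqrt s - 1)).
  { replace ((a + 3) / 2) with (/ s) by (rewrite Has; field; lra).
    rewrite sqrt_inv.
    assert (0 < sqrt s) by (apply sqrt_lt_R0; lra).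
    rewrite <- (sqrt_sqrt s) at 1 by lra; field; lra. }
  assert (HS2 : Rpower t s ^ 2 = Rpower t (2 * s - 2) * t ^ 2).
  { rewrite Rpower_minus_2 by exact Ht.
    replace (2 * s) with (s + s) by ring.
    rewrite Rpower_plus; field; lra. }
  assert (0 < Rpower t (2 * s - 2)) by apply Rpower_pos.
  unfold U_pot, V_pot.
  replace (2 * (sqrt ((a + 3) / 2) - 1)) with (2 * sqrt ((a + 3) / 2) - 3 + 1) by ring.
  rewrite !Rpower_comp_div, Hxi_exp, Hmu_exp, Rpower_O, HS2 by exact Ht.
  replace (A + 1) with (2 * s - 2) by (unfold s; field).
  fold s.
  replace l with (/ s * (ell + 1 / 2) - 1 / 2) by lra.
  rewrite Hxi, HE.
  field; lra.
Qed.

Theorem mainTheorem6 (a A xi eta mu calE E l ell : R) (u : R -> R) :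
  0 < a + 3 ->
  newton_dual_exp a A ->
  l + 1 / 2 = 2 / (A + 3) * (ell + 1 / 2) ->
  xi = - calE * (2 / (A + 3)) ^ 2 ->
  E = - eta * (2 / (A + 3)) ^ 2 ->
  C2_pos u ->
  solves_radial (U_pot a xi mu) E l u ->
  solves_radial (V_pot A eta mu) calE ell (newton_transform A u)
  /\ newton_dual_exp (2 * sqrt ((a + 3) / 2) - 3) (2 * sqrt ((A + 3) / 2) - 3).
Proof.
  intros Ha Hd Hl Hxi HE _ Hu.
  split; [| exact (newton_dual_exp_sqrt a A Ha Hd)].
  unfold newton_transform.
  replace (- (A + 1) / 4) with ((1 - (A + 3) / 2) / 2) by field.
  eapply solves_normal_form_ext;
    [| exact (solves_normal_form_power_transform ((A + 3) / 2) _ u Hu)].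
  intros t Ht.
  exact (newton_dual_coefficient a A xi eta mu calE E l ell t Ha Hd Hl Hxi HE Ht).
Qed.
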